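(* Let $m\ge 3$, $n\ge 2$ be integers with $m\ne 2n-1$. Then the squid graph $\mathrm{Sq}(m;1^n)$ is not Schur positive.
   Context: The squid graph $\mathrm{Sq}(m;1^n)$ is obtained from the cycle $C_m$ on $m$ vertices by attaching $n$ new pendant vertices (leaves), each joined by an edge to one common vertex $v_0$ of the cycle. For a finite simple graph $G$, the chromatic symmetric function is $X_G=\sum_{\kappa}\prod_{v\in V(G)}x_{\kappa(v)}$ over proper colorings $\kappa:V(G)\to\{1,2,\dots\}$; $G$ is Schur positive if all coefficients of $X_G$ in the Schur basis are nonnegative. *)

From HB Require Import structures.
From mathcomp Require Import all_boot all_order all_algebra.
From mathcomp Require Import mpoly.
Set Implicit Arguments. Unset Strict Implicit. Unset Printing Implicit Defensive.
Import Order.TTheory GRing.Theory Num.Theory.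
Local Open Scope ring_scope.

Definition simple_graph (V : finType) (e : rel V) : Prop :=
  (forall u v, e u v = e v u) /\ (forall u, e u u = false).

Definition proper_coloring (V : finType) (e : rel V) (N : nat)
  (k : {ffun V -> 'I_N}) : bool :=
  [forall u, forall v, e u v ==> (k u != k v)].

Definition chrom_sym (V : finType) (e : rel V) (N : nat) : {mpoly rat[N]} :=
  \sum_(k : {ffun V -> 'I_N} | proper_coloring e k) \prod_(v : V) 'X_(k v).

(* Partitions of d, encoded as nonincreasing row-length functions
   l : 'I_d -> 'I_d.+1 (row i has length l i, trailing zero rows) with total size d. *)
Definition is_partition (d : nat) (l : {ffun 'I_d -> 'I_d.+1}) : bool :=
  [forall i : 'I_d, forall j : 'I_d, (i <= j)%N ==> (l j <= l i)%N]
  && ((\sum_(i : 'I_d) (l i : nat))%N == d).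

Definition cell (d : nat) (l : {ffun 'I_d -> 'I_d.+1}) (c : 'I_d * 'I_d) : bool :=
  (c.2 < l c.1)%N.

Definition ent (d N : nat) (T : {ffun 'I_d * 'I_d -> option 'I_N}) (c : 'I_d * 'I_d)
  : nat := if T c is Some k then (k : nat) else 0%N.

Definition is_ssyt (d N : nat) (l : {ffun 'I_d -> 'I_d.+1})
  (T : {ffun 'I_d * 'I_d -> option 'I_N}) : bool :=
  [forall c : 'I_d * 'I_d, cell l c == (T c != None)]
  && [forall i : 'I_d, forall j : 'I_d, forall j' : 'I_d,
        [&& cell l (i, j), cell l (i, j') & (j <= j')%N] ==>
        (ent T (i, j) <= ent T (i, j'))%N]
  && [forall i : 'I_d, forall i' : 'I_d, forall j : 'I_d,
        [&& cell l (i, j), cell l (i', j) & (i < i')%N] ==>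
        (ent T (i, j) < ent T (i', j))%N].

Definition schur (d N : nat) (l : {ffun 'I_d -> 'I_d.+1}) : {mpoly rat[N]} :=
  \sum_(T : {ffun 'I_d * 'I_d -> option 'I_N} | is_ssyt l T)
     \prod_(c : 'I_d * 'I_d) (if T c is Some k then 'X_k else 1).

(* X_G is homogeneous of degree d = |V|; the
   specialisation Lambda^d -> Lambda^d_N to N = d variables is an isomorphism
   sending s_l to s_l(x_0..x_(d-1)) for every partition l of d, so X_G is Schur
   positive iff its d-variable specialisation is a nonnegative combination of the
   Schur polynomials s_l, l |- d. *)
Definition schur_positive (V : finType) (e : rel V) : Prop :=
  exists c : {ffun {ffun 'I_#|V| -> 'I_#|V|.+1} -> rat},
    (forall l, is_partition l -> 0 <= c l) /\
    chrom_sym e #|V| = \sum_(l | is_partition l) c l *: schur #|V| l.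

(* The squid graph Sq(m;1^n) on vertex set 'I_(m+n): vertices 0..m-1 form the
   cycle C_m (i ~ i+1 mod m), vertex 0 is v_0, and vertices m..m+n-1 are the
   n leaves, each adjacent to v_0 only. *)
Definition squid_edge (m n : nat) : rel 'I_(m + n) :=
  fun u v =>
    [|| [&& (u < m)%N, (v < m)%N, (u != v :> nat) &
          ((v == (u.+1 %% m)%N :> nat) || (u == (v.+1 %% m)%N :> nat))],
        ((m <= u)%N && (v == 0%N :> nat)) |
        ((m <= v)%N && (u == 0%N :> nat))].

(* If X_G = sum_l c_l s_l with c_l >= 0, then for every weak composition f the
   number of proper colourings of G with colour classes of sizes f 0, f 1, ... --
   the coefficient of x^f in X_G -- equals sum_l c_l K_(l,f).  Moving one unit of
   content from colour 0 to colour 1 when f 1 < f 0 does not decrease a Kostka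
   number: turning the last 0 of the first row into a 1 is injective on
   semistandard tableaux.  So a Schur positive graph has at least as many
   colourings of the shifted type.
   In Sq(m;1^n) the colour class of v_0 has at most k = floor(m/2) vertices.  For
   m even, type (n+k, k) is realised while (n+k-1, k+1) is not; for m odd and
   n >= k+2, type (k+2, k, n-1) is realised while (k+1, k+1, n-1) is not; for m odd
   and n <= k, type (n+k, k, 1) has at least m colourings (choose the cycle vertex
   coloured 2) but (n+k-1, k+1, 1) at most 2n (v_0 must be the vertex coloured 2,
   the rest of the cycle is 2-coloured and exactly one leaf is coloured 1).  The
   only remaining case n = k+1 is m = 2n-1. *)

From mathcomp Require Import all_boot all_order all_algebra.
From mathcomp Require Import mpoly.
From mathcomp Require Import zify.
Set Implicit Arguments. Unset Strict Implicit. Unset Printing Implicit Defensive.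
Import Order.TTheory GRing.Theory Num.Theory.

Lemma sum_bool_card (I : finType) (P Q : pred I) :
  \sum_(i | P i) (Q i : nat) = #|[set i | P i & Q i]|.
Proof.
rewrite -sum1dep_card big_mkcondr /=.
by apply: eq_bigr => i _; case: (Q i).
Qed.

Lemma card_ltn_ord d x : x <= d -> #|[set j : 'I_d | j < x]| = x.
Proof. by move=> le_xd; rewrite -sum1dep_card (big_ord_narrow le_xd) sum1_card card_ord. Qed.

Lemma prefix_card d (P : pred 'I_d) :
  (forall i j : 'I_d, j <= i -> P i -> P j) -> forall j, P j = (j < #|[set i | P i]|).
Proof.
move=> P_prefix j; apply/idP/idP => [Pj | lt_jP].
  have sub : [set i : 'I_d | i < j.+1] \subset [set i | P i].
    by apply/subsetP => i; rewrite !inE ltnS => le_ij; apply: P_prefix Pj.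
  by have := subset_leq_card sub; rewrite card_ltn_ord.
apply: contraLR lt_jP => nPj; rewrite -leqNgt.
have sub : [set i | P i] \subset [set i : 'I_d | i < j].
  apply/subsetP => i; rewrite !inE ltnNge => Pi; apply: contra nPj => le_ji.
  exact: P_prefix Pi.
by have := subset_leq_card sub; rewrite card_ltn_ord // ltnW.
Qed.

Definition mnm_of N (f : nat -> nat) : 'X_{1..N} := [multinom f i | i < N].

Definition colorings (V : finType) (e : rel V) (f : nat -> nat) :
    {set {ffun V -> 'I_#|V|}} :=
  [set k | proper_coloring e k & [forall i, #|[set v | k v == i]| == f i]].

Definition tableaux d N (l : {ffun 'I_d -> 'I_d.+1}) (f : nat -> nat) :
    {set {ffun 'I_d * 'I_d -> option 'I_N}} :=
  [set T | is_ssyt l T & [forall i, #|[set c | T c == Some i]| == f i]].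

Section Coefficients.
Local Open Scope ring_scope.

Lemma eq_mnm_of N (x : 'X_{1..N}) f : (x == mnm_of N f) = [forall i, x i == f i].
Proof.
apply/eqP/forallP => [-> i|x_f]; first by rewrite mnmE.
by apply/mnmP => i; rewrite mnmE; apply/eqP.
Qed.

Lemma mcoeff_sum_mpolyX N (I : finType) (P : pred I) (F : I -> 'X_{1..N}) f :
  (\sum_(i | P i) ('X_[F i] : {mpoly rat[N]}))@_(mnm_of N f) =
  #|[set i | P i & [forall j, F i j == f j]]|%:R.
Proof.
rewrite raddf_sum /= -sum_bool_card natr_sum.
by apply: eq_bigr => i _; rewrite mcoeffX eq_mnm_of.
Qed.

Lemma mnm_sum_option N (I : finType) (g : I -> option 'I_N) (j : 'I_N) :
  (\sum_(x : I) (if g x is Some i then U_(i) else 0))%MM j =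
  #|[set x | g x == Some j]|.
Proof.
rewrite mnm_sumE -sum1dep_card [RHS]big_mkcond; apply: eq_bigr => x _.
by case: (g x) => [i|]; rewrite ?mnm1E ?mnm0E // (inj_eq Some_inj); case: (i == j).
Qed.

Lemma mcoeff_chrom_sym (V : finType) (e : rel V) f :
  (chrom_sym e #|V|)@_(mnm_of #|V| f) = #|colorings e f|%:R.
Proof.
rewrite /chrom_sym; under eq_bigr do rewrite (mprodXE _ (fun v => U_(_ v)%MM)).
rewrite mcoeff_sum_mpolyX; congr (_%:R); apply: eq_card => k; rewrite !inE.
congr (_ && _); apply: eq_forallb => i.
have := mnm_sum_option (Some \o k) i; rewrite /= => ->.
by congr (#|_| == _); apply/setP => v; rewrite !inE (inj_eq Some_inj).
Qed.

Lemma mcoeff_schur N d (l : {ffun 'I_d -> 'I_d.+1}) f :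
  (schur N l)@_(mnm_of N f) = #|tableaux N l f|%:R.
Proof.
rewrite /schur.
have prodE (T : {ffun 'I_d * 'I_d -> option 'I_N}) :
    \prod_c (if T c is Some i then 'X_i else 1 : {mpoly rat[N]}) =
    'X_[\sum_c (if T c is Some i then U_(i) else 0)]%MM.
  by rewrite -mprodXE; apply: eq_bigr => c _; case: (T c) => [i|]; rewrite ?mpolyX0.
under eq_bigr do rewrite prodE.
rewrite mcoeff_sum_mpolyX; congr (_%:R); apply: eq_card => T; rewrite !inE.
by congr (_ && _); apply: eq_forallb => i; rewrite mnm_sum_option.
Qed.

End Coefficients.

Lemma is_ssytP d N (l : {ffun 'I_d -> 'I_d.+1}) (T : {ffun 'I_d * 'I_d -> option 'I_N}) :
  reflect [/\ forall c, cell l c = (T c != None),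
    forall i j j' : 'I_d, j < l i -> j' < l i -> j <= j' -> ent T (i, j) <= ent T (i, j') &
    forall i i' j : 'I_d, j < l i -> j < l i' -> i < i' -> ent T (i, j) < ent T (i', j)]
    (is_ssyt l T).
Proof.
apply: (iffP idP) => [/andP[/andP[/forallP cellE /forallP rowP] /forallP colP] | [cellE rowP colP]].
  split => [c | i j j' lj lj' le_jj' | i i' j li li' lt_ii']; first exact: eqP (cellE c).
    by move/forallP/(_ j)/forallP/(_ j')/implyP: (rowP i); apply; rewrite /cell lj lj'.
  by move/forallP/(_ i')/forallP/(_ j)/implyP: (colP i); apply; rewrite /cell li li'.
apply/andP; split; first (apply/andP; split).
- by apply/forallP => c; rewrite cellE.
- do 3!apply/forallP => ?; apply/implyP => /and3P[]; exact: rowP.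
- do 3!apply/forallP => ?; apply/implyP => /and3P[]; exact: colP.
Qed.

Definition shift01 (f : nat -> nat) (t : nat) : nat :=
  if t == 0 then (f 0).-1 else if t == 1 then (f 1).+1 else f t.

(* The last 0 of the first row may become a 1: the entry to its right is at
   least 1, and the entry below it is not 1, since the 1s of every lower row
   are left-justified and fewer than the 0s. *)
Section RaiseEntry.
Variables (d N : nat) (l : {ffun 'I_d -> 'I_d.+1}).
Hypothesis l_partition : is_partition l.
Variables (i0 i1 : 'I_N) (r0 : 'I_d).
Hypotheses (i0E : i0 = 0 :> nat) (i1E : i1 = 1 :> nat) (r0E : r0 = 0 :> nat).

Lemma partition_row_le (i j : 'I_d) : i <= j -> l j <= l i.
Proof. by case/andP: l_partition => /forallP/(_ i)/forallP/(_ j)/implyP. Qed.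

Definition raise_entry (c0 : 'I_d * 'I_d) (T : {ffun 'I_d * 'I_d -> option 'I_N}) :
    {ffun 'I_d * 'I_d -> option 'I_N} :=
  [ffun c => if c == c0 then Some i1 else T c].

Variable T : {ffun 'I_d * 'I_d -> option 'I_N}.
Hypothesis T_ssyt : is_ssyt l T.
Implicit Types (i j : 'I_d) (z : 'I_N).

Let cellE := let: And3 P _ _ := elimT (is_ssytP l T) T_ssyt in P.
Let rowP := let: And3 _ P _ := elimT (is_ssytP l T) T_ssyt in P.
Let colP := let: And3 _ _ P := elimT (is_ssytP l T) T_ssyt in P.

Lemma ssyt_Some_cell i j z : T (i, j) = Some z -> j < l i.
Proof. by move=> Tij; have := cellE (i, j); rewrite /cell Tij. Qed.

Lemma ssyt_cell_Some i j : j < l i -> exists z, T (i, j) = Some z.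
Proof.
by move=> lij; have := cellE (i, j); rewrite /cell lij; case: (T (i, j)) => // z; exists z.
Qed.

Lemma ssyt_zero_row i j : T (i, j) = Some i0 -> i = r0.
Proof.
move=> Tij; apply: val_inj; rewrite /= r0E; apply/eqP; rewrite -leqn0 leqNgt.
apply/negP => i_gt0; have lij := ssyt_Some_cell Tij.
have l0j : j < l r0 by apply: leq_trans lij (partition_row_le _); rewrite r0E.
by have := colP l0j lij; rewrite r0E /ent Tij i0E => /(_ i_gt0).
Qed.

Lemma ssyt_entry_le_prefix i j (j' : 'I_d) z : T (i, j) = Some z -> j' <= j ->
  exists2 z', T (i, j') = Some z' & z' <= z.
Proof.
move=> Tij le_j'j; have lij := ssyt_Some_cell Tij.
have [z' Tij'] := ssyt_cell_Some (leq_ltn_trans le_j'j lij).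
by exists z' => //; have := rowP (leq_ltn_trans le_j'j lij) lij le_j'j; rewrite /ent Tij Tij'.
Qed.

Lemma ssyt_zero_prefix j (j' : 'I_d) : T (r0, j) = Some i0 -> j' <= j -> T (r0, j') = Some i0.
Proof.
move=> T0j /(ssyt_entry_le_prefix T0j) [z ->]; rewrite i0E leqn0 => /eqP z0.
by congr Some; apply: val_inj; rewrite /= z0 i0E.
Qed.

Lemma ssyt_one_prefix i j (j' : 'I_d) : i != r0 -> T (i, j) = Some i1 -> j' <= j ->
  T (i, j') = Some i1.
Proof.
move=> i_neq0 Tij /(ssyt_entry_le_prefix Tij) [z Tij']; rewrite i1E => z_le1.
have z_neq0 : z != 0 :> nat.
  apply: contra i_neq0 => /eqP z0; apply/eqP/(@ssyt_zero_row _ j').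
  by rewrite Tij'; congr Some; apply: val_inj; rewrite /= z0 i0E.
by rewrite Tij'; congr Some; apply: val_inj; rewrite /= i1E; lia.
Qed.

Local Notation zeros := #|[set c | T c == Some i0]|.
Local Notation ones := #|[set c | T c == Some i1]|.

Lemma ssyt_card_zeros : zeros = #|[set j | T (r0, j) == Some i0]|.
Proof.
have pair_r0_inj : injective (pair r0 : 'I_d -> 'I_d * 'I_d) by move=> j j' [].
rewrite -(card_imset _ pair_r0_inj).
apply: eq_card => -[i j]; rewrite !inE; apply/eqP/imsetP => [Tij | [j' ] ].
  by exists j; rewrite ?inE -(ssyt_zero_row Tij) ?Tij.
by rewrite inE => /eqP T0j' [-> ->].
Qed.

Lemma ssyt_zeroE i j : (T (i, j) == Some i0) = (i == r0) && (j < zeros).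
Proof.
have [-> | i_neq0] := eqVneq i r0; last by apply: contraNF i_neq0 => /eqP /ssyt_zero_row ->.
rewrite ssyt_card_zeros (prefix_card (P := fun j => T (r0, j) == Some i0)) //.
by move=> k k' le_k'k /eqP T0k; rewrite (ssyt_zero_prefix T0k le_k'k).
Qed.

Lemma ssyt_card_zeros_le : zeros <= d.
Proof. by rewrite ssyt_card_zeros (leq_trans (max_card _)) ?card_ord. Qed.

Lemma ssyt_one_lt_ones i j : i != r0 -> T (i, j) = Some i1 -> j < ones.
Proof.
move=> i_neq0 Tij.
have sub : [set (i, j') | j' in [set j' : 'I_d | j' < j.+1]] \subset [set c | T c == Some i1].
  apply/subsetP => c /imsetP[j' ]; rewrite inE ltnS => le_j'j ->.
  by rewrite inE (ssyt_one_prefix i_neq0 Tij le_j'j).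
have := subset_leq_card sub.
by rewrite card_imset ?card_ltn_ord // => j1 j2 [].
Qed.

Variable ja : 'I_d.
Hypotheses (ja_last_zero : ja.+1 = zeros) (ones_lt_zeros : ones < zeros).

Lemma ssyt_last_zero : T (r0, ja) = Some i0.
Proof. by apply/eqP; rewrite ssyt_zeroE eqxx -ja_last_zero ltnSn. Qed.

Let T' := raise_entry (r0, ja) T.

Lemma raise_entry_ssyt : is_ssyt l T'.
Proof.
apply/is_ssytP; split.
- by move=> c; rewrite /T' ffunE; case: (c =P (r0, ja)) => [->|_]; rewrite cellE ?ssyt_last_zero.
- move=> i j j' lij lij' le_jj'; rewrite /ent /T' !ffunE.
  case: ((i, j) =P (r0, ja)) => [[ei ej] | ne_ij];
    case: ((i, j') =P (r0, ja)) => [[ei' ej'] | ne_ij'] //; subst.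
  + have [z T0j'] := ssyt_cell_Some lij'; rewrite T0j' i1E lt0n.
    have lt_ja_j' : ja < j'.
      by rewrite ltn_neqAle le_jj' andbT; apply/eqP => /val_inj ej'; apply: ne_ij'; rewrite ej'.
    have := ssyt_zeroE r0 j'; rewrite T0j' eqxx -ja_last_zero ltnNge lt_ja_j' /=.
    by apply: contraFneq => z0; apply/eqP; congr Some; apply: val_inj; rewrite /= z0 i0E.
  + by have := rowP lij lij' le_jj'; rewrite /ent ssyt_last_zero i0E leqn0 i1E => /eqP ->.
  + exact: rowP.
- move=> i i' j lij li'j lt_ii'; rewrite /ent /T' !ffunE.
  case: ((i, j) =P (r0, ja)) => [[ei ej] | ne_ij];
    case: ((i', j) =P (r0, ja)) => [[ei' ej'] | ne_i'j]; subst.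
  + by rewrite ltnn in lt_ii'.
  + have i'_neq0 : i' != r0 by apply: contraTneq lt_ii' => ->; rewrite ltnn.
    have [z Ti'ja] := ssyt_cell_Some li'j; rewrite Ti'ja i1E.
    have z_neq0 : z != 0 :> nat.
      apply: contraNneq i'_neq0 => z0; have := ssyt_zeroE i' ja; rewrite Ti'ja.
      have -> : z = i0 by apply: val_inj; rewrite /= z0 i0E.
      by rewrite eqxx => /esym/andP[].
    have z_neq1 : z != 1 :> nat.
      apply/eqP => z1; have Ti'ja1 : T (i', ja) = Some i1.
        by rewrite Ti'ja; congr Some; apply: val_inj; rewrite /= z1 i1E.
      by have := ssyt_one_lt_ones i'_neq0 Ti'ja1; lia.
    lia.
  + by move: lt_ii'; rewrite r0E.
  + exact: colP.
Qed.

Lemma card_raise_entry (i : 'I_N) : #|[set c | T' c == Some i]| =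
  if i == 0 :> nat then zeros.-1 else if i == 1 :> nat then ones.+1
  else #|[set c | T c == Some i]|.
Proof.
have T'E (k : 'I_N) c : (T' c == Some k) = if c == (r0, ja) then i1 == k else T c == Some k.
  by rewrite /T' ffunE; case: (c =P (r0, ja)) => // _; rewrite (inj_eq Some_inj).
case: ifP => [/eqP i_0 | i_neq0].
  have -> : i = i0 by apply: val_inj; rewrite /= i_0 i0E.
  have := cardsD1 (r0, ja) [set c | T c == Some i0].
  rewrite inE ssyt_last_zero eqxx add1n -ja_last_zero => -[->].
  apply: eq_card => c; rewrite !inE T'E; case: (c =P (r0, ja)) => //= _.
  by apply/negbTE; rewrite -val_eqE /= i0E i1E.
case: ifP => [/eqP i_1 | i_neq1].
  have -> : i = i1 by apply: val_inj; rewrite /= i_1 i1E.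
  have := cardsU1 (r0, ja) [set c | T c == Some i1].
  rewrite inE ssyt_last_zero (inj_eq Some_inj) -val_eqE /= i0E i1E add1n => <-.
  by apply: eq_card => c; rewrite !inE T'E; case: (c =P (r0, ja)) => [->|]; rewrite ?eqxx.
apply: eq_card => c; rewrite !inE T'E; case: (c =P (r0, ja)) => // ->.
by rewrite ssyt_last_zero (inj_eq Some_inj) -!val_eqE /= i0E i1E eq_sym i_neq1 eq_sym i_neq0.
Qed.

Lemma raise_entry_tableaux (f : nat -> nat) : (forall i : 'I_N, #|[set c | T c == Some i]| = f i) ->
  T' \in tableaux N l (shift01 f).
Proof.
move=> cnt; rewrite inE raise_entry_ssyt /=; apply/forallP => i.
by rewrite card_raise_entry !cnt i0E i1E.
Qed.

End RaiseEntry.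

Lemma tableaux_eq0 d N (l : {ffun 'I_d -> 'I_d.+1}) f :
  is_partition l -> 0 < N -> d < f 0 -> tableaux N l f = set0.
Proof.
move=> l_part N_gt0 f0_gt; apply/setP => T; rewrite in_set0 inE.
apply/negP => /andP[T_ssyt /forallP/(_ (Ordinal N_gt0))/eqP cnt].
suff : #|[set c | T c == Some (Ordinal N_gt0)]| <= d by rewrite cnt leqNgt f0_gt.
have [d0 | d_gt0] := posnP d.
  by apply: leq_trans (max_card _) _; rewrite card_prod card_ord d0.
exact: (ssyt_card_zeros_le l_part (i0 := Ordinal N_gt0) (r0 := Ordinal d_gt0) erefl erefl T_ssyt).
Qed.

Lemma kostka_shift01 d N (l : {ffun 'I_d -> 'I_d.+1}) f :
  is_partition l -> 1 < N -> f 1 < f 0 ->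
  #|tableaux N l f| <= #|tableaux N l (shift01 f)|.
Proof.
move=> l_part N_gt1 lt_f10.
have [f0_gt | f0_le] := ltnP d (f 0).
  by rewrite (tableaux_eq0 l_part (ltnW N_gt1) f0_gt) cards0.
pose i0 := Ordinal (ltnW N_gt1); pose i1 := Ordinal N_gt1.
have ja_lt : (f 0).-1 < d by lia.
pose r0 := Ordinal (leq_ltn_trans (leq0n _) ja_lt); pose ja := Ordinal ja_lt.
have tabP T : T \in tableaux N l f ->
    [/\ is_ssyt l T, forall i, #|[set c | T c == Some i]| = f i &
        ja.+1 = #|[set c | T c == Some i0]|].
  rewrite inE => /andP[T_ssyt /forallP cnt]; have cntE i := eqP (cnt i).
  by split => //; rewrite cntE /=; lia.
have raise_inj : {in tableaux N l f &, injective (raise_entry i1 (r0, ja))}.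
  move=> T1 T2 T1_in T2_in /ffunP eqT; apply/ffunP => c.
  have [-> | ne_c] := eqVneq c (r0, ja); last by have := eqT c; rewrite !ffunE (negbTE ne_c).
  have T_ja T : T \in tableaux N l f -> T (r0, ja) = Some i0.
    case/tabP => T_ssyt _.
    exact: (ssyt_last_zero l_part (i0 := i0) (r0 := r0) erefl erefl T_ssyt).
  by rewrite !T_ja.
rewrite -(card_in_imset raise_inj); apply/subset_leq_card/subsetP => _ /imsetP[T T_in ->].
have [T_ssyt cnt ja_last] := tabP T T_in.
have ones_lt : #|[set c | T c == Some i1]| < #|[set c | T c == Some i0]| by rewrite !cnt.
exact: (raise_entry_tableaux l_part (i0 := i0) (i1 := i1) (r0 := r0) erefl erefl erefl
          T_ssyt ja_last ones_lt cnt).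
Qed.

Lemma schur_positive_colorings_shift01 (V : finType) (e : rel V) f :
  1 < #|V| -> f 1 < f 0 -> schur_positive e ->
  #|colorings e f| <= #|colorings e (shift01 f)|.
Proof.
move=> V_gt1 lt_f10 [c [c_ge0 chromE]].
rewrite -(ler_nat rat) -!mcoeff_chrom_sym chromE !raddf_sum /=.
apply: ler_sum => l l_part; rewrite !mcoeffZ ler_wpM2l ?c_ge0 // !mcoeff_schur ler_nat.
exact: kostka_shift01.
Qed.

Definition comp3 (a b c : nat) (t : nat) : nat :=
  if t == 0 then a else if t == 1 then b else if t == 2 then c else 0.

Lemma eq_colorings (V : finType) (e : rel V) f g : f =1 g -> colorings e f = colorings e g.
Proof. by move=> fg; apply/setP => k; rewrite !inE; under eq_forallb do rewrite fg. Qed.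

Lemma not_schur_positive_comp3 (V : finType) (e : rel V) a b c :
  1 < #|V| -> b < a ->
  #|colorings e (comp3 a.-1 b.+1 c)| < #|colorings e (comp3 a b c)| ->
  ~ schur_positive e.
Proof.
move=> V_gt1 lt_ba; rewrite ltnNge => /negP shift_lt e_pos; apply: shift_lt.
have -> : colorings e (comp3 a.-1 b.+1 c) = colorings e (shift01 (comp3 a b c)).
  by apply: eq_colorings => -[|[|[|t]]].
exact: schur_positive_colorings_shift01.
Qed.

Section SquidColorings.
Variables m n : nat.
Hypothesis m_ge3 : 2 < m.
Local Notation V := 'I_(m + n).
Local Notation E := (@squid_edge m n).
Local Notation coloring := {ffun V -> 'I_#|V|}.
Implicit Types (k : coloring) (f : nat -> nat).

(* Colours of vertices indexed by plain numbers, with junk value 0 beyond m + n,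
   so that colour classes are counted by sums over intervals. *)
Definition color_at k (t : nat) : nat := if insub t is Some v then val (k v) else 0.

Lemma color_atE k (v : V) : color_at k v = k v.
Proof. by rewrite /color_at valK. Qed.

Lemma color_at_lt k t : color_at k t < m + n.
Proof.
rewrite /color_at; case: insubP => [v _ _ | _]; last lia.
by apply: leq_trans (ltn_ord _) _; rewrite card_ord.
Qed.

Lemma card_class k (i : 'I_#|V|) :
  #|[set v | k v == i]| = \sum_(0 <= t < m + n) (color_at k t == i).
Proof.
by rewrite big_mkord sum_bool_card; apply: eq_card => v; rewrite !inE color_atE.
Qed.

Lemma proper_color_at k (u v : V) :
  proper_coloring E k -> E u v -> color_at k u != color_at k v.
Proof.
move=> /forallP/(_ u)/forallP/(_ v)/implyP k_proper /k_proper.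
by rewrite !color_atE val_eqE.
Qed.

Lemma color_cycle_succ k t : proper_coloring E k -> t.+1 < m -> color_at k t != color_at k t.+1.
Proof.
move=> k_proper lt_t1m.
have lt_t : t < m + n by lia.
have lt_t1 : t.+1 < m + n by lia.
apply: (proper_color_at (u := Ordinal lt_t) (v := Ordinal lt_t1) k_proper).
rewrite /squid_edge /= (modn_small lt_t1m) eqxx /= lt_t1m (ltnW lt_t1m) /=.
by rewrite neq_ltn ltnSn.
Qed.

Lemma color_cycle_last k : proper_coloring E k -> color_at k m.-1 != color_at k 0.
Proof.
move=> k_proper.
have lt_last : m.-1 < m + n by lia.
have lt_0 : 0 < m + n by lia.
apply: (proper_color_at (u := Ordinal lt_last) (v := Ordinal lt_0) k_proper).
by rewrite /squid_edge /= prednK ?modnn ?eqxx /=; lia.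
Qed.

Lemma color_leaf k t : proper_coloring E k -> m <= t < m + n -> color_at k t != color_at k 0.
Proof.
move=> k_proper /andP[le_mt lt_t]; have lt_0 : 0 < m + n by lia.
apply: (proper_color_at (u := Ordinal lt_t) (v := Ordinal lt_0) k_proper).
by rewrite /squid_edge /= le_mt eqxx /= orbT.
Qed.

Lemma count_color_cycle_path k (c a b : nat) : proper_coloring E k -> b <= m ->
  \sum_(a <= t < b) (color_at k t == c) <= (b - a).+1./2.
Proof.
move=> k_proper le_bm; move: {2}(b - a) (erefl (b - a)) => L.
elim/ltn_ind: L a => L IH a eL.
have [lt_a1b | le_ba1] := ltnP a.+1 b; last first.
  have [lt_ab | le_ba] := ltnP a b; last by rewrite big_geq.
  have -> : b = a.+1 by lia.
  by rewrite big_nat1; case: (_ == c); lia.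
rewrite big_ltn; last lia.
rewrite big_ltn //.
have pair_le1 : (color_at k a == c) + (color_at k a.+1 == c) <= 1.
  have := color_cycle_succ k_proper (leq_trans lt_a1b le_bm).
  case: (color_at k a =P c) => [-> | _] neq_c; last by case: (_ == c).
  by rewrite eq_sym (negbTE neq_c).
have := IH (b - a.+2) (ltac:(lia)) a.+2 erefl; lia.
Qed.

Lemma card_class_v0 k : proper_coloring E k ->
  \sum_(0 <= t < m + n) (color_at k t == color_at k 0) <= m./2.
Proof.
move=> k_proper.
rewrite (big_cat_nat _ (n := m)) /=; [|lia|lia].
rewrite [X in _ + X]big1_seq ?addn0 => [|t]; last first.
  by rewrite mem_index_iota => /(color_leaf k_proper) /negbTE ->.
rewrite big_ltn; last lia.
rewrite big_ltn; last lia.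
rewrite eqxx eq_sym (negbTE (color_cycle_succ k_proper (_ : 1 < m))); last lia.
rewrite (big_cat_nat _ (n := m.-1)) /=; [|lia|lia].
rewrite [\sum_(m.-1 <= i < m) _]big1_seq => [|t]; last first.
  rewrite mem_index_iota => t_last; have -> : t = m.-1 by lia.
  by rewrite (negbTE (color_cycle_last k_proper)).
have := count_color_cycle_path (color_at k 0) 2 k_proper (leq_pred m); lia.
Qed.

Lemma colorings_class k f c : k \in colorings E f -> c < m + n ->
  \sum_(0 <= t < m + n) (color_at k t == c) = f c.
Proof.
rewrite inE => /andP[_ /forallP k_class] lt_c.
have lt_cV : c < #|V| by rewrite card_ord.
by have /eqP := k_class (Ordinal lt_cV); rewrite card_class.
Qed.

Lemma colorings_color_pos k f t : k \in colorings E f -> t < m + n -> 0 < f (color_at k t).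
Proof.
move=> k_in lt_t; rewrite -(colorings_class k_in (color_at_lt k t)).
by rewrite (bigD1_seq t) ?mem_index_iota ?iota_uniq //= eqxx.
Qed.

Lemma colorings_v0 k f : k \in colorings E f -> f (color_at k 0) <= m./2.
Proof.
move=> k_in; have k_proper : proper_coloring E k by move: k_in; rewrite inE => /andP[].
by rewrite -(colorings_class k_in (color_at_lt k 0)) card_class_v0.
Qed.

Lemma colorings_eq0 f : (forall c, 0 < f c -> m./2 < f c) -> colorings E f = set0.
Proof.
move=> f_big; apply/setP => k; rewrite in_set0; apply/negP => k_in.
have lt_0 : 0 < m + n by lia.
by have := f_big _ (colorings_color_pos k_in lt_0); rewrite ltnNge colorings_v0.
Qed.

(* [enum_rank v] only provides a default element of ['I_#|V|]. *)
Definition pattern_coloring (p : nat -> nat) : coloring :=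
  [ffun v : V => insubd (enum_rank v) (p v)].

Section Pattern.
Variable p : nat -> nat.
Hypothesis p_lt : forall t, p t < m + n.

Lemma color_at_pattern t : t < m + n -> color_at (pattern_coloring p) t = p t.
Proof.
move=> lt_t; rewrite -[t]/(val (Ordinal lt_t)) color_atE ffunE val_insubd /=.
by have -> : p t < #|V| by rewrite card_ord p_lt.
Qed.

Lemma pattern_coloring_proper :
  (forall t, t.+1 < m -> p t != p t.+1) -> p m.-1 != p 0 ->
  (forall t, m <= t < m + n -> p t != p 0) -> proper_coloring E (pattern_coloring p).
Proof.
move=> p_succ p_last p_leaf.
have p_cycle a b : a < m -> b = a.+1 %% m -> p a != p b.
  move=> lt_am ->; have [lt_a1m | ] := ltnP a.+1 m; first by rewrite modn_small // p_succ.
  move=> le_ma1; have -> : a = m.-1 by lia.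
  by rewrite prednK ?modnn //; lia.
apply/forallP => u; apply/forallP => v; apply/implyP => e_uv.
suff : p u != p v.
  by apply: contra_neq => k_uv; rewrite -!color_at_pattern ?ltn_ord // !color_atE k_uv.
case/or3P: e_uv => [/and4P[lt_um lt_vm _ /orP[/eqP|/eqP]] | /andP[le_mu /eqP ->]
                  | /andP[le_mv /eqP ->]].
- exact: p_cycle.
- by rewrite eq_sym; apply: p_cycle.
- by apply: p_leaf; rewrite le_mu ltn_ord.
- by rewrite eq_sym; apply: p_leaf; rewrite le_mv ltn_ord.
Qed.

Lemma card_class_pattern (i : 'I_#|V|) :
  #|[set v | pattern_coloring p v == i]| = \sum_(0 <= t < m + n) (p t == i).
Proof.
by rewrite card_class; apply: eq_big_nat => t /andP[_ lt_t]; rewrite color_at_pattern.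
Qed.

End Pattern.
End SquidColorings.

Lemma sum_parity_eq (a b c x y : nat) : a <= b ->
  \sum_(a <= t < b) ((if odd t then x else y) == c) =
  (x == c) * (b./2 - a./2) + (y == c) * (uphalf b - uphalf a).
Proof.
have sum0 b' : \sum_(0 <= t < b') ((if odd t then x else y) == c) =
    (x == c) * b'./2 + (y == c) * uphalf b'.
  elim: b' => [|b' IH]; first by rewrite big_geq // !muln0.
  by rewrite big_nat_recr // IH /=; case odd_b: (odd b'); case: (x == c); case: (y == c) => /=; lia.
move=> le_ab; have := sum0 b; rewrite (big_cat_nat _ (n := a)) //= sum0.
by case: (x == c); case: (y == c) => /=; lia.
Qed.

Section SquidPattern.
Variables m n : nat.
Hypothesis m_ge3 : 2 < m.
Local Notation E := (@squid_edge m n).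

Definition squid_pattern (w L t : nat) : nat :=
  if t < m then
    if t == w then 2 else if t < w then (if odd t then 0 else 1) else (if odd t then 1 else 0)
  else if t < m + L then 0 else 2.

Lemma squid_pattern_le2 w L t : squid_pattern w L t <= 2.
Proof. by rewrite /squid_pattern; do !case: ifP. Qed.

Lemma squid_pattern_proper w L : w <= m -> odd m = (w != m) -> L <= n -> (w == 0) ==> (L == n) ->
  proper_coloring E (pattern_coloring m n (squid_pattern w L)).
Proof.
move=> le_wm odd_m le_Ln w0_L.
apply: (pattern_coloring_proper m_ge3) => [t | t lt_t1m | | t /andP[le_mt lt_t]].
- by apply: leq_ltn_trans (squid_pattern_le2 _ _ _) _; lia.
- rewrite /squid_pattern ltnW // lt_t1m.
  case: (ltngtP t w) => h1; case: (ltngtP t.+1 w) => h2;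
    rewrite ?eqxx ?(gtn_eqF h1) ?(ltn_eqF h1) ?(gtn_eqF h2) ?(ltn_eqF h2) /=;
    try lia; rewrite ?oddS; case: (odd t) => //=.
- rewrite /squid_pattern; do !case: ifP; move=> *; lia.
- rewrite /squid_pattern; do !case: ifP; move=> *; lia.
Qed.

Lemma sum_squid_pattern w L c : w <= m -> L <= n ->
  \sum_(0 <= t < m + n) (squid_pattern w L t == c) =
  comp3 (w./2 + (uphalf m - uphalf w.+1) + L) (uphalf w + (m./2 - w.+1./2))
        ((w < m) + (n - L)) c.
Proof.
move=> le_wm le_Ln.
rewrite (big_cat_nat _ (n := m)) /=; [|lia|lia].
rewrite (big_cat_nat _ (n := m + L) (m := m)) /=; [|lia|lia].
have leaves_0 : \sum_(m <= t < m + L) (squid_pattern w L t == c) = (0 == c) * L.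
  transitivity (\sum_(m <= t < m + L) (0 == c)); last by rewrite sum_nat_const_nat addKn mulnC.
  by apply: eq_big_nat => t /andP[le_mt lt_t]; rewrite /squid_pattern ifN ?lt_t //; lia.
have leaves_2 : \sum_(m + L <= t < m + n) (squid_pattern w L t == c) = (2 == c) * (n - L).
  transitivity (\sum_(m + L <= t < m + n) (2 == c)); last by rewrite sum_nat_const_nat subnDl mulnC.
  apply: eq_big_nat => t /andP[le_t lt_t].
  by rewrite /squid_pattern ifN ?ifN //; lia.
have before_w : \sum_(0 <= t < w) (squid_pattern w L t == c) =
    (0 == c) * (w./2 - 0./2) + (1 == c) * (uphalf w - uphalf 0).
  rewrite -sum_parity_eq //; apply: eq_big_nat => t /andP[_ lt_tw].
  by rewrite /squid_pattern (leq_trans lt_tw le_wm) lt_tw (ltn_eqF lt_tw).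
have after_w : \sum_(w <= t < m) (squid_pattern w L t == c) =
    (2 == c) * (w < m) + ((1 == c) * (m./2 - w.+1./2) + (0 == c) * (uphalf m - uphalf w.+1)).
  have [lt_wm | le_mw] := ltnP w m; last first.
    have -> : w = m by lia.
    have -> : m./2 - m.+1./2 = 0 by lia.
    have -> : uphalf m - uphalf m.+1 = 0 by lia.
    by rewrite big_geq // !muln0.
  rewrite big_ltn // -sum_parity_eq //; congr (_ + _).
    by rewrite /squid_pattern lt_wm eqxx muln1.
  apply: eq_big_nat => t /andP[lt_wt lt_tm].
  by rewrite /squid_pattern lt_tm (gtn_eqF lt_wt) ltnNge (ltnW lt_wt).
rewrite (big_cat_nat _ (n := w)) //= before_w after_w leaves_0 leaves_2.
by move: c {before_w after_w leaves_0 leaves_2} => [|[|[|c]]]; rewrite /comp3 /=; lia.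
Qed.

Lemma squid_pattern_in w L a b c : w <= m -> odd m = (w != m) -> L <= n -> (w == 0) ==> (L == n) ->
  a = w./2 + (uphalf m - uphalf w.+1) + L -> b = uphalf w + (m./2 - w.+1./2) ->
  c = (w < m) + (n - L) ->
  pattern_coloring m n (squid_pattern w L) \in colorings E (comp3 a b c).
Proof.
move=> le_wm odd_m le_Ln w0_L -> -> ->.
rewrite inE squid_pattern_proper //=; apply/forallP => i.
rewrite card_class_pattern ?sum_squid_pattern // => t.
by apply: leq_ltn_trans (squid_pattern_le2 _ _ _) _; lia.
Qed.

End SquidPattern.

Section FewLeaves.
Variables m n : nat.
Hypotheses (m_ge3 : 2 < m) (odd_m : odd m).
Local Notation V := 'I_(m + n).
Local Notation E := (@squid_edge m n).
Local Notation f := (comp3 (n + m./2).-1 (m./2).+1 1).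

Lemma card_colorings_few_leaves_ge : m <= #|colorings E (comp3 (n + m./2) m./2 1)|.
Proof.
have pattern_inj : injective (fun w : 'I_m => pattern_coloring m n (squid_pattern m w n)).
  move=> w1 w2 /= eq_w; apply/val_inj/eqP.
  have p_lt w t : squid_pattern m w n t < m + n.
    by apply: leq_ltn_trans (squid_pattern_le2 _ _ _ _) _; lia.
  have lt_w1 : w1 < m + n := ltn_addr n (ltn_ord w1).
  have := color_at_pattern (p_lt w2) lt_w1; rewrite -eq_w color_at_pattern //.
  by rewrite /squid_pattern ltn_ord eqxx eq_sym; case: eqP => // _; do !case: ifP.
rewrite -[X in X <= _](card_ord m) -[X in X <= _]cardsT.
rewrite -[X in X <= _](card_imset _ pattern_inj).
apply/subset_leq_card/subsetP => _ /imsetP[w _ ->].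
have lt_wm := ltn_ord w.
by apply: squid_pattern_in; rewrite ?eqxx ?implybT //; try lia.
Qed.

Hypothesis n_ge2 : 1 < n.

Section OneColoring.
Variable k : {ffun V -> 'I_#|V|}.
Hypothesis k_in : k \in colorings E f.

Lemma color_v0 : color_at k 0 = 2.
Proof.
have := colorings_v0 m_ge3 k_in; have := colorings_color_pos m_ge3 k_in (_ : 0 < m + n).
by case: (color_at k 0) => [|[|[|c]]]; rewrite /comp3 /=; lia.
Qed.

Lemma color_le1 t : 0 < t < m + n -> color_at k t <= 1.
Proof.
case/andP => t_gt0 lt_t; have lt_2 : 2 < m + n by lia.
have := colorings_color_pos m_ge3 k_in lt_t.
suff : color_at k t != 2 by case: (color_at k t) => [|[|[|c]]]; rewrite /comp3 /=; lia.
have := colorings_class k_in lt_2; rewrite big_ltn; last lia.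
have t_in : t \in index_iota 1 (m + n) by rewrite mem_index_iota t_gt0.
rewrite color_v0 eqxx (bigD1_seq t t_in (iota_uniq _ _)).
by case: (color_at k t =P 2) => //= _; rewrite /comp3 /=; lia.
Qed.

Lemma color_cycle_alt t : 0 < t < m ->
  color_at k t = if odd t then color_at k 1 else 1 - color_at k 1.
Proof.
have k_proper : proper_coloring E k by move: k_in; rewrite inE => /andP[].
elim: t => [|t IH] /andP[t_ge0 lt_tm] //.
have [-> // | t_gt0] := posnP t.
have := IH (ltac:(lia)); have := color_cycle_succ m_ge3 k_proper lt_tm.
have := color_le1 (ltac:(lia) : 0 < t < m + n).
have := color_le1 (ltac:(lia) : 0 < t.+1 < m + n).
have := color_le1 (ltac:(lia) : 0 < 1 < m + n).
by rewrite oddS; case: (odd t) => /=; lia.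
Qed.

Lemma one_leaf_colored1 : exists j1 : 'I_n, [set j : 'I_n | color_at k (m + j) == 1] = [set j1].
Proof.
have lt_1 : 1 < m + n by lia.
have k1_le1 := color_le1 (_ : 0 < 1 < m + n).
have cycle_ones : \sum_(1 <= t < m) (color_at k t == 1) =
    \sum_(1 <= t < m) ((if odd t then color_at k 1 else 1 - color_at k 1) == 1).
  by apply: eq_big_nat => t /andP[t_gt0 lt_tm]; rewrite color_cycle_alt ?t_gt0.
have leaves : \sum_(m <= t < m + n) (color_at k t == 1) = 1.
  have := colorings_class k_in lt_1; rewrite (big_cat_nat _ (n := m)) /=; [|lia|lia].
  rewrite big_ltn ?color_v0 /=; last lia.
  rewrite cycle_ones sum_parity_eq; last lia.
  by move: k1_le1; case: (color_at k 1) => [|[|c]] c_le1; rewrite /comp3 /=; lia.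
apply/cards1P/eqP; rewrite -[RHS]leaves (big_addn 0 _ m) addKn big_mkord.
by rewrite sum_bool_card; apply: eq_card => j; rewrite !inE addnC.
Qed.

End OneColoring.

Lemma card_colorings_few_leaves_le : #|colorings E f| <= 2 * n.
Proof.
have n_gt0 : 0 < n by lia.
pose leaf1 (k : {ffun V -> 'I_#|V|}) :=
  odflt (Ordinal n_gt0) [pick j : 'I_n | color_at k (m + j) == 1].
have leaf1E k (j : 'I_n) : k \in colorings E f -> (color_at k (m + j) == 1) = (j == leaf1 k).
  move=> k_in; have [j1 j1E] := one_leaf_colored1 k_in.
  have eq_j1 (j' : 'I_n) : (color_at k (m + j') == 1) = (j' == j1).
    by move/setP: j1E => /(_ j'); rewrite !inE.
  rewrite eq_j1 /leaf1; case: pickP => [j' | no_leaf]; first by rewrite eq_j1 => /eqP ->.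
  by have := no_leaf j1; rewrite eq_j1 eqxx.
have eq_bit x y : x <= 1 -> y <= 1 -> (x == 1) = (y == 1) -> x = y.
  by case: x => [|[|x]]; case: y => [|[|y]].
have F_inj : {in colorings E f &, injective (fun k => (color_at k 1 == 1, leaf1 k))}.
  move=> k1 k2 k1_in k2_in [eq1 eq_leaf]; apply/ffunP => v; apply: val_inj; rewrite /= -!color_atE.
  have lt_1 : 0 < 1 < m + n by lia.
  have [-> | v_gt0] := posnP v; first by rewrite (color_v0 k1_in) (color_v0 k2_in).
  have [lt_vm | le_mv] := ltnP v m.
    have v_cycle : 0 < v < m by rewrite v_gt0.
    rewrite (color_cycle_alt k1_in v_cycle) (color_cycle_alt k2_in v_cycle).
    by rewrite (eq_bit _ _ (color_le1 k1_in lt_1) (color_le1 k2_in lt_1) eq1).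
  have lt_j : v - m < n by have := ltn_ord v; lia.
  have v_leaf : 0 < v < m + n by rewrite v_gt0 ltn_ord.
  apply: (eq_bit _ _ (color_le1 k1_in v_leaf) (color_le1 k2_in v_leaf)).
  have -> : nat_of_ord v = m + Ordinal lt_j by rewrite /= subnKC.
  by rewrite (leaf1E _ _ k1_in) (leaf1E _ _ k2_in) eq_leaf.
rewrite -(card_in_imset F_inj); apply: leq_trans (max_card _) _.
by rewrite card_prod card_bool card_ord.
Qed.

End FewLeaves.

Section SquidNotSchurPositive.
Variables m n : nat.
Hypotheses (m_ge3 : 2 < m) (n_ge2 : 1 < n).
Local Notation E := (@squid_edge m n).

Let V_gt1 : 1 < #|'I_(m + n)|.
Proof. by rewrite card_ord; lia. Qed.

Let comp3_big a b c : m./2 < a -> m./2 < b -> c = 0 \/ m./2 < c ->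
  forall t, 0 < comp3 a b c t -> m./2 < comp3 a b c t.
Proof. by move=> a_big b_big c_big [|[|[|t]]]; rewrite /comp3 /=; lia. Qed.

Lemma squid_even_not_schur_positive : ~~ odd m -> ~ schur_positive E.
Proof.
move=> even_m; apply: (@not_schur_positive_comp3 _ _ (n + m./2) m./2 0 V_gt1); first lia.
rewrite (colorings_eq0 _ m_ge3) ?cards0; last by apply: comp3_big; lia.
apply/card_gt0P; exists (pattern_coloring m n (squid_pattern m m n)).
by apply: squid_pattern_in; rewrite ?eqxx ?(negbTE even_m) //; lia.
Qed.

Lemma squid_odd_many_leaves_not_schur_positive :
  odd m -> m./2 + 2 <= n -> ~ schur_positive E.
Proof.
move=> odd_m many_leaves.
apply: (@not_schur_positive_comp3 _ _ (m./2).+2 m./2 n.-1 V_gt1); first lia.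
rewrite (colorings_eq0 _ m_ge3) ?cards0; last by apply: comp3_big; lia.
apply/card_gt0P; exists (pattern_coloring m n (squid_pattern m m.-1 2)).
by apply: squid_pattern_in; rewrite ?odd_m //; lia.
Qed.

Lemma squid_odd_few_leaves_not_schur_positive :
  odd m -> n <= m./2 -> ~ schur_positive E.
Proof.
move=> odd_m few_leaves.
apply: (@not_schur_positive_comp3 _ _ (n + m./2) m./2 1 V_gt1); first lia.
have := card_colorings_few_leaves_le m_ge3 odd_m n_ge2.
have := card_colorings_few_leaves_ge n m_ge3 odd_m.
lia.
Qed.

End SquidNotSchurPositive.

Theorem theorem3p8 (m n : nat) :
  (3 <= m)%N -> (2 <= n)%N -> m <> (2 * n - 1)%N ->
  ~ schur_positive (@squid_edge m n).
Proof.
move=> m_ge3 n_ge2 m_neq.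
have [odd_m | even_m] := boolP (odd m); last exact: squid_even_not_schur_positive.
have [few_leaves | many_leaves] := leqP n m./2.
  exact: squid_odd_few_leaves_not_schur_positive.
by apply: squid_odd_many_leaves_not_schur_positive => //; lia.
Qed.
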